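(* Let $M$ be a smooth manifold, $\nabla$ an affine connection on $M$, and $(\hat J_1,\hat J_2,\hat J_3)$ a generalized almost para-quaternionic structure on $M$. If $\hat J_1$ and $\hat J_2$ are $\nabla$-integrable, then $\hat J_3$ is $\nabla$-integrable. Moreover, if $\hat J_2$ and $\hat J_3$ are $\nabla$-integrable, then $\hat J_1$ is $\nabla$-integrable.
   Context: A generalized almost para-quaternionic structure: endomorphisms $\hat J_1,\hat J_2,\hat J_3$ of $TM\oplus T^*M$ with $\hat J_1^2=-I$, $\hat J_2^2=\hat J_3^2=I$, $\hat J_1\hat J_2=-\hat J_2\hat J_1$, $\hat J_3=\hat J_1\hat J_2$. The $\nabla$-bracket: $[X+\eta,Y+\beta]_\nabla:=[X,Y]+\nabla_X\beta-\nabla_Y\eta$. $N^\nabla_{\hat K}(\sigma,\tau):=[\hat K\sigma,\hat K\tau]_\nabla-\hat K[\hat K\sigma,\tau]_\nabla-\hat K[\sigma,\hat K\tau]_\nabla+\hat K^2[\sigma,\tau]_\nabla$; $\hat K$ is $\nabla$-integrable if $N^\nabla_{\hat K}=0$. *)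

(* Abstract model of the sections of TM and T*M. *)
From HB Require Import structures.
From mathcomp Require Import all_boot all_order all_algebra.
From mathcomp Require Import reals.
Set Implicit Arguments. Unset Strict Implicit. Unset Printing Implicit Defensive.
Import Order.TTheory GRing.Theory Num.Theory.
Local Open Scope ring_scope.


Definition nabla_bracket (R : realType) (XM Om : lmodType R)
    (lie : XM -> XM -> XM) (nabla : XM -> Om -> Om)
    (s t : XM * Om) : XM * Om :=
  (lie s.1 t.1, nabla s.1 t.2 - nabla t.1 s.2).

Definition nabla_nijenhuis (R : realType) (XM Om : lmodType R)
    (lie : XM -> XM -> XM) (nabla : XM -> Om -> Om)
    (K : XM * Om -> XM * Om) (s t : XM * Om) : XM * Om :=
  let br := nabla_bracket lie nabla in
  br (K s) (K t) - K (br (K s) t) - K (br s (K t)) + K (K (br s t)).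

Definition nabla_integrable (R : realType) (XM Om : lmodType R)
    (lie : XM -> XM -> XM) (nabla : XM -> Om -> Om)
    (K : XM * Om -> XM * Om) : Prop :=
  forall s t, nabla_nijenhuis lie nabla K s t = 0.

Definition gen_almost_para_quaternionic (R : realType) (XM Om : lmodType R)
    (J1 J2 J3 : XM * Om -> XM * Om) : Prop :=
  [/\ forall s, J1 (J1 s) = - s,
      forall s, J2 (J2 s) = s,
      forall s, J3 (J3 s) = s,
      forall s, J1 (J2 s) = - J2 (J1 s)
    & forall s, J3 s = J1 (J2 s)].

(* Minimal structural properties of the Lie bracket of vector fields and of an
   affine connection acting on 1-forms, at the level of R-vector spaces. *)
Definition lie_bracket_like (R : realType) (XM : lmodType R)
    (lie : XM -> XM -> XM) : Prop :=
  [/\ forall Y, linear (lie^~ Y), forall X, linear (lie X)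
    & forall X Y, lie X Y = - lie Y X].

Definition connection_like (R : realType) (XM Om : lmodType R)
    (nabla : XM -> Om -> Om) : Prop :=
  (forall b, linear (nabla^~ b)) /\ (forall X, linear (nabla X)).

From HB Require Import structures.
From mathcomp Require Import all_boot all_order all_algebra.
From mathcomp Require Import reals.
Set Implicit Arguments. Unset Strict Implicit. Unset Printing Implicit Defensive.
Import GRing.Theory Num.Theory.
Local Open Scope ring_scope.

(* The nabla-bracket is biadditive, and for biadditive brackets the Nijenhuis
   tensor of a composite of anticommuting maps A, B with A^2 = +-1, B^2 = +-1
   satisfies
     2 N_{AB}(s,t) = T_{A,B}(s,t) + T_{B,A}(s,t),  where
     T_{P,Q}(s,t) = N_P(Qs,Qt) - Q N_P(Qs,t) - Q N_P(s,Qt) - Q^2 N_P(s,t),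
   an identity checked by expanding both sides.  Hence N_A = N_B = 0 forces
   N_{AB} = 0 once 2 is cancellable.  Apply this to (A,B) = (J1,J2), whose
   composite is J3, and to (A,B) = (J3,J2), whose composite is J1. *)

Section ZmodExpr.

Variable V : zmodType.

Inductive zexpr := ZAtom of nat | ZAdd of zexpr & zexpr | ZOpp of zexpr | ZZero.

Fixpoint zeval (env : seq V) (e : zexpr) : V :=
  match e with
  | ZAtom i => env`_i
  | ZAdd e1 e2 => zeval env e1 + zeval env e2
  | ZOpp e1 => - zeval env e1
  | ZZero => 0
  end.

Fixpoint zcoef (e : zexpr) (i : nat) : int :=
  match e with
  | ZAtom j => (i == j : nat)%:Z
  | ZAdd e1 e2 => zcoef e1 i + zcoef e2 i
  | ZOpp e1 => - zcoef e1 i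
  | ZZero => 0
  end.

Lemma zeval_coef env e :
  zeval env e = \sum_(i < size env) env`_i *~ zcoef e i.
Proof.
elim: e => [j|e1 IH1 e2 IH2|e1 IH1|] /=.
- rewrite (eq_bigr (fun i : 'I_ _ => if i == j :> nat then env`_i else 0)).
    by rewrite -big_mkcond big_ord1_eq; case: ltnP => // /(nth_default 0).
  by move=> i _; case: eqP; rewrite ?mulr1z ?mulr0z.
- by rewrite IH1 IH2 -big_split; apply: eq_bigr => i _; rewrite mulrzDr.
- by rewrite IH1 -sumrN; apply: eq_bigr => i _; rewrite mulrNz.
- by rewrite big1 // => i _; rewrite mulr0z.
Qed.

Lemma zeval_eq env e1 e2 :
  all (fun i => zcoef e1 i == zcoef e2 i) (iota 0 (size env)) ->
  zeval env e1 = zeval env e2.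
Proof.
move=> /allP coef_eq; rewrite !zeval_coef; apply: eq_bigr => i _.
by rewrite (eqP (coef_eq i _)) // mem_iota ltn_ord.
Qed.

End ZmodExpr.

Ltac zindex x env :=
  match env with
  | x :: _ => constr:(O)
  | _ :: ?env' => let n := zindex x env' in constr:(S n)
  end.

Ltac zatoms t env :=
  match t with
  | (?a + ?b)%R => let env' := zatoms a env in zatoms b env'
  | (- ?a)%R => zatoms a env
  | 0%R => env
  | _ => match env with context [t :: _] => env | _ => constr:(t :: env) end
  end.

Ltac zreify t env :=
  match t with
  | (?a + ?b)%R =>
      let ea := zreify a env in let eb := zreify b env in constr:(ZAdd ea eb)
  | (- ?a)%R => let ea := zreify a env in constr:(ZOpp ea)
  | 0%R => constr:(ZZero)
  | _ => let i := zindex t env in constr:(ZAtom i)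
  end.

(* Proves an equation between sums and opposites of arbitrary terms of a
   zmodType by comparing the integer coefficient of every atom. *)
Ltac abel :=
  match goal with |- ?l = ?r :> ?V =>
    let env := zatoms r (@nil V) in let env := zatoms l env in
    let el := zreify l env in let er := zreify r env in
    change (zeval env el = zeval env er); apply: zeval_eq; vm_compute; reflexivity
  end.

Section Nijenhuis.

Variables (V : zmodType) (br : V -> V -> V).
Hypotheses (brDl : forall c, {morph br^~ c : a b / a + b})
           (brDr : forall c, {morph br c : a b / a + b}).

Lemma br0l c : br 0 c = 0.
Proof. by apply: (addrI (br 0 c)); rewrite -brDl !addr0. Qed.

Lemma br0r c : br c 0 = 0.
Proof. by apply: (addrI (br c 0)); rewrite -brDr !addr0. Qed.

Lemma brNl a c : br (- a) c = - br a c.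
Proof. by apply: (addrI (br a c)); rewrite -brDl !subrr br0l. Qed.

Lemma brNr a c : br c (- a) = - br c a.
Proof. by apply: (addrI (br c a)); rewrite -brDr !subrr br0r. Qed.

Definition nijenhuis (K : V -> V) (s t : V) : V :=
  br (K s) (K t) - K (br (K s) t) - K (br s (K t)) + K (K (br s t)).

Definition nijenhuis_twist (P Q : V -> V) (s t : V) : V :=
  nijenhuis P (Q s) (Q t) - Q (nijenhuis P (Q s) t) - Q (nijenhuis P s (Q t))
  - Q (Q (nijenhuis P s t)).

Lemma eq_nijenhuis (K K' : V -> V) : K =1 K' -> nijenhuis K =2 nijenhuis K'.
Proof. by move=> eqK s t; rewrite /nijenhuis !eqK. Qed.

Variables A B : {additive V -> V}.
Hypotheses (AA : (forall v, A (A v) = v) \/ (forall v, A (A v) = - v))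
           (BB : (forall v, B (B v) = v) \/ (forall v, B (B v) = - v))
           (BA : forall v, B (A v) = - A (B v)).

Lemma nijenhuis_comp s t :
  nijenhuis (A \o B) s t *+ 2 = nijenhuis_twist A B s t + nijenhuis_twist B A s t.
Proof.
rewrite /nijenhuis_twist /nijenhuis /= mulr2n.
by case: AA => AA'; case: BB => BB';
  do ![progress rewrite ?(raddfD A) ?(raddfD B) ?(raddfN A) ?(raddfN B)
          ?brDl ?brDr ?brNl ?brNr ?AA' ?BB' ?BA ?opprK ?opprD];
  abel.
Qed.

Hypothesis mul2n_eq0 : forall v : V, v *+ 2 = 0 -> v = 0.

Lemma nijenhuis_comp_eq0 :
  (forall s t, nijenhuis A s t = 0) -> (forall s t, nijenhuis B s t = 0) ->
  forall s t, nijenhuis (A \o B) s t = 0.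
Proof.
move=> NA0 NB0 s t; apply: mul2n_eq0.
by rewrite nijenhuis_comp /nijenhuis_twist !NA0 !NB0 !raddf0 !addr0.
Qed.

End Nijenhuis.

Lemma lmod_mulrn_eq0 (R : numFieldType) (V : lmodType R) (v : V) n :
  (v *+ n == 0) = (n == 0)%N || (v == 0).
Proof. by rewrite -scaler_nat scaler_eq0 pnatr_eq0. Qed.

Section NablaBracket.

Variables (R : realType) (XM Om : lmodType R).
Variables (lie : XM -> XM -> XM) (nabla : XM -> Om -> Om).
Hypotheses (lie_like : lie_bracket_like lie) (nabla_like : connection_like nabla).

Let linear_additive (U W : lmodType R) (f : U -> W) (lin_f : linear f) :
  {morph f : x y / x + y} := (GRing.semilinear_linear lin_f).2.

Lemma nabla_bracketDl c : {morph nabla_bracket lie nabla ^~ c : a b / a + b}.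
Proof.
case: lie_like nabla_like => lieDl _ _ [nablaDl nablaDr] [a1 a2] [b1 b2].
rewrite /nabla_bracket /= (linear_additive (lieDl _)).
by rewrite (linear_additive (nablaDl _)) (linear_additive (nablaDr _)) opprD addrACA.
Qed.

Lemma nabla_bracketDr c : {morph nabla_bracket lie nabla c : a b / a + b}.
Proof.
case: lie_like nabla_like => _ lieDr _ [nablaDl nablaDr] [a1 a2] [b1 b2].
rewrite /nabla_bracket /= (linear_additive (lieDr _)).
by rewrite (linear_additive (nablaDl _)) (linear_additive (nablaDr _)) opprD addrACA.
Qed.

Lemma nabla_nijenhuisE :
  nabla_nijenhuis lie nabla = nijenhuis (nabla_bracket lie nabla).
Proof. by []. Qed.

End NablaBracket.

Theorem proposition2p12 (R : realType) (XM Om : lmodType R)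
    (lie : XM -> XM -> XM) (nabla : XM -> Om -> Om)
    (J1 J2 J3 : {linear (XM * Om)%type -> (XM * Om)%type}) :
  lie_bracket_like lie ->
  connection_like nabla ->
  gen_almost_para_quaternionic J1 J2 J3 ->
  (nabla_integrable lie nabla J1 -> nabla_integrable lie nabla J2 ->
     nabla_integrable lie nabla J3) /\
  (nabla_integrable lie nabla J2 -> nabla_integrable lie nabla J3 ->
     nabla_integrable lie nabla J1).
Proof.
move=> lie_like nabla_like [J1J1 J2J2 J3J3 J1J2 J3E].
have J2J1 v : J2 (J1 v) = - J1 (J2 v) by rewrite J1J2 opprK.
have J2J3 v : J2 (J3 v) = - J3 (J2 v) by rewrite !J3E J2J1 J2J2.
have J1E v : J1 v = J3 (J2 v) by rewrite J3E J2J2.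
have mul2n_eq0 (v : (XM * Om)%type) : v *+ 2 = 0 -> v = 0.
  by move/eqP; rewrite lmod_mulrn_eq0 => /eqP.
have brDl := nabla_bracketDl lie_like nabla_like.
have brDr := nabla_bracketDr lie_like nabla_like.
split=> [J1int J2int s t | J2int J3int s t].
- rewrite nabla_nijenhuisE (eq_nijenhuis _ J3E).
  exact: (nijenhuis_comp_eq0 brDl brDr (or_intror J1J1) (or_introl J2J2) J2J1).
- rewrite nabla_nijenhuisE (eq_nijenhuis _ J1E).
  exact: (nijenhuis_comp_eq0 brDl brDr (or_introl J3J3) (or_introl J2J2) J2J3).
Qed.
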